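(* Let $(\mathbf F,\prec)$ be an IS-family over a finite set $V$ and let $x\ge0$ be an integer. Then $\bigcup_{S\in\mathbf{Pr}_x}S=\bigcup_{S\in\mathbf E_x}S$.
   Context: Let $V$ be a finite set, $n=|V|$, $\mathbf F$ a family of subsets of $V$ and $\prec$ a strict partial order on $\mathbf F$; $S\preceq S'$ means $S\prec S'$ or $S=S'$. For $S\in\mathbf F$ and $v\in V$, $S$ covers $v$ if there is $S'\in\mathbf F$ with $S'\prec S$ and $v\in S'\setminus S$. $Pred(S)$ is the set of $S'\in\mathbf F$ with $S'\prec S$ such that there is no $S''\in\mathbf F$ with $S'\prec S''\prec S$. The visible set $Vis(S)$ is the set of $v\in V$ such that $v\in S'$ for some $S'\in Pred(S)$ and $v$ is not covered by any element of $Pred(S)$. For $S\in\mathbf F$ and $v\in S$, a witness of $v$ w.r.t. $S$ is a $\prec$-minimal element $S'\in\mathbf F$ with $S\prec S'$ and $v\in S\setminus S'$. $(\mathbf F,\prec)$ is an IS-family if: (SE) there is a unique element $sm(\mathbf F)\in\mathbf F$ with $sm(\mathbf F)\prec S$ for every other $S\in\mathbf F$; (SM) $S_1\prec S_2$ implies $|S_1|<|S_2|$; (SW) for every $S\in\mathbf F$ and $v\in S$ there is at most one witness of $v$ w.r.t. $S$; (TE) if $S_1\prec S_2\prec S_3$ are in $\mathbf F$ and $v\in S_1\setminus S_2$ then $v\in S_1\setminus S_3$; (LVS) for every $S\in\mathbf F$ and $S'\in Pred(S)$, $|S'|\le |Vis(S)|$; (DVS) for every $S\in\mathbf F$ with $S\ne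 sm(\mathbf F)$, $Vis(S)$ is not a subset of $S$; (EC) $sm(\mathbf F)$ can be computed in $O(n^3)$ time, for given $S\in\mathbf F$ and $v\in S$ the witness of $v$ w.r.t. $S$ can be computed (or its nonexistence reported) in $O(n^3)$ time, and $S_1\prec S_2$ can be tested in $O(|S_1|)$ time. Notation: $hat(S)=S\setminus\bigcup_{S'\prec S}S'$; $ex(S)=|S|-|sm(\mathbf F)|$; $\mathbf E_x=\{S\in\mathbf F: ex(S)\le x\}$; $S\in\mathbf F$ is principal if $hat(S)\ne\emptyset$; $\mathbf{Pr}_x$ is the family of all principal sets $S\in\mathbf F$ with $ex(S)\le x$. *)

From mathcomp Require Import all_boot.
Set Implicit Arguments. Unset Strict Implicit. Unset Printing Implicit Defensive.

Section ISFamily.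
Variable V : finType.
Variable F : {set {set V}}.
(* r S1 S2 stands for S1 ≺ S2; only its restriction to F matters. *)
Variable r : rel {set V}.

Definition strict_porder_on : Prop :=
  (forall S, S \in F -> ~~ r S S) /\
  (forall S1 S2 S3, S1 \in F -> S2 \in F -> S3 \in F ->
     r S1 S2 -> r S2 S3 -> r S1 S3).

Definition covers (S : {set V}) (v : V) : bool :=
  [exists S' in F, r S' S && (v \in S') && (v \notin S)].

Definition Pred (S : {set V}) : {set {set V}} :=
  [set S' in F | r S' S && ~~ [exists S'' in F, r S' S'' && r S'' S]].

Definition Vis (S : {set V}) : {set V} :=
  [set v | [exists S' in Pred S, v \in S'] &&
           [forall T in Pred S, ~~ covers T v]].

Definition witness (S : {set V}) (v : V) (S' : {set V}) : Prop :=
  [/\ S' \in F, r S S', v \in S, v \notin S' &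
      forall S'', S'' \in F -> r S S'' -> v \in S -> v \notin S'' ->
        ~~ r S'' S'].

Definition is_sm (s : {set V}) : Prop :=
  s \in F /\ forall S, S \in F -> S != s -> r s S.

Definition IS_family : Prop :=
  strict_porder_on /\
      (exists! s, is_sm s) /\
      (forall S1 S2, S1 \in F -> S2 \in F -> r S1 S2 -> #|S1| < #|S2|) /\
      (forall S v S1 S2, S \in F -> v \in S ->
                    witness S v S1 -> witness S v S2 -> S1 = S2) /\
      (forall S1 S2 S3 v, S1 \in F -> S2 \in F -> S3 \in F ->
                    r S1 S2 -> r S2 S3 -> v \in S1 :\: S2 -> v \in S1 :\: S3) /\
      (forall S S', S \in F -> S' \in Pred S -> #|S'| <= #|Vis S|) /\
      (forall s S, is_sm s -> S \in F -> S != s -> ~~ (Vis S \subset S)).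

Definition hat (S : {set V}) : {set V} :=
  S :\: \bigcup_(S' in F | r S' S) S'.

Definition principal (S : {set V}) : bool := hat S != set0.

(* E_x = {S in F : ex(S) <= x}, ex(S) = |S| - |sm(F)| *)
Definition Ex (x : nat) : {set {set V}} :=
  [set S in F | [forall s in F, [forall S0 in F, (S0 != s) ==> r s S0] ==> (#|S| <= #|s| + x)]].

Definition Prx (x : nat) : {set {set V}} :=
  [set S in Ex x | principal S].

End ISFamily.

From mathcomp Require Import all_boot.

Set Implicit Arguments. Unset Strict Implicit. Unset Printing Implicit Defensive.

(* For v in S, take a set S' of least size among the members of F that contain
   v and lie weakly below S. Any strict predecessor of S' containing v would
   also lie below S and be strictly smaller (SM), so v is in hat(S'); and
   |S'| <= |S| keeps S' inside E_x. *)

Section PrincipalCover.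
Variables (V : finType) (F : {set {set V}}) (r : rel {set V}).

Hypothesis r_trans : forall S1 S2 S3, S1 \in F -> S2 \in F -> S3 \in F ->
  r S1 S2 -> r S2 S3 -> r S1 S3.
Hypothesis r_card : forall S1 S2, S1 \in F -> S2 \in F -> r S1 S2 -> #|S1| < #|S2|.

Lemma Ex_card_mono x (S T : {set V}) :
  S \in Ex F r x -> T \in F -> #|T| <= #|S| -> T \in Ex F r x.
Proof.
rewrite !inE => /andP[_ /forallP exS] TF leTS; rewrite TF /=.
apply/forallP => s; apply/implyP => sF; apply/implyP => sm_s.
by rewrite (leq_trans leTS) // (implyP (implyP (exS s) sF) sm_s).
Qed.

Lemma mem_hat_min (S : {set V}) (v : V) :
  v \in S -> (forall T, T \in F -> r T S -> v \notin T) -> v \in hat F r S.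
Proof.
move=> vS notinT; rewrite !inE vS andbT.
by apply/bigcupP => -[T /andP[TF rTS]]; apply/negP/notinT.
Qed.

Lemma exists_hat_below (S : {set V}) (v : V) : S \in F -> v \in S ->
  exists2 S', S' \in F & (#|S'| <= #|S|) && (v \in hat F r S').
Proof.
move=> SF vS.
pose below T := [&& T \in F, v \in T & (T == S) || r T S].
have belowS : below S by rewrite /below SF vS eqxx.
case: (arg_minnP (fun T : {set V} => #|T|) belowS) => S' /and3P[S'F vS' S'S] S'min.
exists S' => //; apply/andP; split.
  by case/orP: S'S => [/eqP -> | rS'S]; last exact/ltnW/r_card.
apply: mem_hat_min => // T TF rTS'; apply/negP => vT.
have belowT : below T.
  rewrite /below TF vT /=; case/orP: S'S => [/eqP <- | rS'S]; first by rewrite rTS' orbT.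
  by rewrite (r_trans TF S'F SF rTS' rS'S) orbT.
by have := S'min T belowT; rewrite leqNgt r_card.
Qed.

End PrincipalCover.

Theorem proposition4 (V : finType) (F : {set {set V}}) (r : rel {set V})
  (x : nat) :
  IS_family F r ->
  \bigcup_(S in Prx F r x) S = \bigcup_(S in Ex F r x) S.
Proof.
move=> [[_ r_trans] [_ [r_card _]]].
apply/setP => v; apply/bigcupP/bigcupP => -[S].
  by rewrite inE => /andP[exS _] vS; exists S.
move=> exS vS; have SF : S \in F by move: exS; rewrite inE => /andP[].
have [S' S'F /andP[leS'S vhat]] := exists_hat_below r_trans r_card SF vS.
exists S'; last by move: vhat; rewrite inE => /andP[].
rewrite inE (Ex_card_mono exS S'F leS'S) /principal.
by apply/set0Pn; exists v.
Qed.
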